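(* Let $(R,pR)$ be a discrete valuation domain with valuation $\mathsf{v}$ and finite residue field. Let $f\in R[x]$ be a primitive, non-constant polynomial with irreducible divisor set $\mathcal{P}$ and write $f=\prod_{g\in\mathcal{P}}g^{m_g}$ with multiplicity vector $\mathbf{m}=(m_g)_{g\in\mathcal{P}}\in\mathbb{N}^{\mathcal{P}}$. Assume $n:=\mathsf{v}(\operatorname{d}(f))\in\mathbb{N}$ (so $n\ge 1$) and set $F=\frac{f}{p^n}\in\operatorname{Int}(R)$. If $\operatorname{fdk}(f)\neq\mathbf{0}$, then $F$ is not absolutely irreducible in $\operatorname{Int}(R)$. More precisely, if $F$ is irreducible in $\operatorname{Int}(R)$ and $\mathbf{0}\neq\mathbf{v}\in\operatorname{fdk}(f)\cap\mathbb{Z}^{\mathcal{P}}$, then $F^j$ factors non-uniquely in $\operatorname{Int}(R)$ for every $j\in\mathbb{N}$ with $$j\ \ge\ (n+1)\left(\left\lceil\Big\|\tfrac{\mathbf{v}^+}{\mathbf{m}}\Big\|_\infty\right\rceil+\left\lceil\Big\|\tfrac{\mathbf{v}^-}{\mathbf{m}}\Big\|_\infty\right\rceil\right).$$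
   Context: $(R,pR)$ is a discrete valuation domain with valuation $\mathsf{v}$, finite residue field, and quotient field $K$. $\operatorname{Int}(R)=\{F\in K[x]\mid F(R)\subseteq R\}$; its units are the units of $R$. For $f\in R[x]$, the fixed divisor $\operatorname{d}(f)$ is $\gcd(f(a)\mid a\in R)$, so $\mathsf{v}(\operatorname{d}(f))=\min_{a\in R}\mathsf{v}(f(a))$. A polynomial in $R[x]$ is primitive if its coefficients generate $R$ as an ideal. An irreducible divisor set $\mathcal{P}$ of $f$ is a set of representatives of the associate classes (in $R[x]$) of the irreducible divisors of $f$ in $R[x]$. For $a\in R$ let $\mathsf{v}_{\mathcal{P}}(a)=(\mathsf{v}(g(a)))_{g\in\mathcal{P}}$. The set of fixed divisor witnesses is $\mathcal{W}(f)=\{a\in R\mid \mathsf{v}(f(a))=\mathsf{v}(\operatorname{d}(f))\}$. The fixed divisor kernel is the $\mathbb{Q}$-subspace $$\operatorname{fdk}(f)=\Big\{\mathbf{u}=(u_g)_{g\in\mathcal{P}}\in\mathbb{Q}^{\mathcal{P}}\ \Big|\ \forall a\in\mathcal{W}(f):\ \textstyle\sum_{g\in\mathcal{P}}u_g\,\mathsf{v}(g(a))=0\Big\}.$$ For $\mathbf{u}\in\mathbb{Q}^{\mathcal{P}}$: $\mathbf{u}^+=\max(\mathbf{u},\mathbf{0})$ and $\mathbf{u}^-=-\min(\mathbf{u},\mathbf{0})$ componentwise; $\|\mathbf{u}\|_\infty=\max_g|u_g|$; for $\mathbf{w}$ with all entries nonzero, $\frac{\mathbf{u}}{\mathbf{w}}=(u_g/w_g)_{g\in\mathcal{P}}$.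 In a commutative ring, two factorizations into irreducibles $a_1\cdots a_k=b_1\cdots b_l$ are essentially the same if $k=l$ and after reindexing $a_i$ and $b_i$ are associated; an element ''factors non-uniquely'' if it has two essentially different factorizations into irreducibles. An irreducible $r$ is absolutely irreducible if for every $k\in\mathbb{N}$ every factorization of $r^k$ is essentially the same as $r\cdots r$. *)

From HB Require Import structures.
From mathcomp Require Import all_boot all_order all_algebra.
Set Implicit Arguments. Unset Strict Implicit. Unset Printing Implicit Defensive.
Import Order.TTheory GRing.Theory Num.Theory.
Local Open Scope ring_scope.

(* A discrete valuation domain R is modelled as the valuation ring of a
   discrete valuation v : K^* -> Z on its quotient field K, with uniformizer p
   (v p = 1, so pR is the maximal ideal).  v 0 is irrelevant (v(0) = oo is
   handled by explicit "!= 0" side conditions). *)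
Section DVR.
Variable K : fieldType.
Variable v : K -> int.

Definition inR (x : K) : bool := (x == 0) || (0 <= v x).

Record is_dvr (p : K) : Prop := {
  dvr_mul : forall x y, x != 0 -> y != 0 -> v (x * y) = v x + v y;
  dvr_add : forall x y, x != 0 -> y != 0 -> x + y != 0 ->
              (v x <= v (x + y)) || (v y <= v (x + y));
  dvr_p_neq0 : p != 0;
  dvr_vp : v p = 1;
  dvr_res_fin : exists s : seq K, all inR s /\
      forall x, inR x -> exists2 r, r \in s & exists2 y, inR y & x - r = p * y
}.

Definition polyR (f : {poly K}) : Prop := forall i, inR f`_i.
Definition intR (F : {poly K}) : Prop := forall a, inR a -> inR F.[a].

(* the coefficients of f generate R as an ideal *)
Definition primitiveR (f : {poly K}) : Prop :=
  exists c : nat -> K, (forall i, inR (c i)) /\ \sum_(i < size f) c i * f`_i = 1.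

(* v(d(f)) = n, using v(d(f)) = min_{a in R} v(f(a)) *)
Definition fd_val (f : {poly K}) (n : nat) : Prop :=
  (exists2 a, inR a & f.[a] != 0 /\ v f.[a] = n%:Z) /\
  (forall a, inR a -> f.[a] != 0 -> n%:Z <= v f.[a]).

Definition fd_witness (f : {poly K}) (n : nat) (a : K) : Prop :=
  inR a /\ f.[a] != 0 /\ v f.[a] = n%:Z.

Section Fact.
Variable S : {poly K} -> Prop.
Definition unitS (u : {poly K}) := S u /\ exists2 w, S w & u * w = 1.
Definition assocS (a b : {poly K}) := exists2 u, unitS u & a = u * b.
Definition irredS (r : {poly K}) :=
  [/\ S r, r != 0, ~ unitS r &
      forall a b, S a -> S b -> r = a * b -> unitS a \/ unitS b].
Definition dvdS (g f : {poly K}) := exists2 h, S h & f = g * h.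
Definition factorizationS (x : {poly K}) (s : seq {poly K}) :=
  (forall r, r \in s -> irredS r) /\ \prod_(r <- s) r = x.
Definition ess_sameS (s t : seq {poly K}) :=
  size s = size t /\ exists t', perm_eq t t' /\
    forall i, (i < size s)%N -> assocS (nth 0 s i) (nth 0 t' i).
Definition factors_nonuniquely (x : {poly K}) :=
  exists s t, [/\ factorizationS x s, factorizationS x t & ~ ess_sameS s t].
Definition abs_irredS (r : {poly K}) :=
  irredS r /\ forall (k : nat) (s : seq {poly K}),
    factorizationS (r ^+ k) s -> ess_sameS s (nseq k r).
End Fact.

Definition irr_divisor_set (k : nat) (P : 'I_k -> {poly K}) (f : {poly K}) :=
  [/\ forall i, irredS polyR (P i) /\ dvdS polyR (P i) f,
      forall i j, assocS polyR (P i) (P j) -> i = j &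
      forall g, irredS polyR g -> dvdS polyR g f -> exists i, assocS polyR g (P i)].

Definition in_fdk (f : {poly K}) (n : nat) (k : nat) (P : 'I_k -> {poly K})
    (u : 'I_k -> rat) : Prop :=
  forall a, fd_witness f n a -> \sum_(i < k) u i * (v (P i).[a])%:~R = 0.

End DVR.

Definition sup_norm (k : nat) (u : 'I_k -> rat) : rat :=
  \big[Num.max/0]_(i < k) `|u i|.
Definition vpos_div (k : nat) (w : 'I_k -> int) (m : 'I_k -> nat) (i : 'I_k) : rat :=
  (Num.max (w i) 0)%:~R / (m i)%:R.
Definition vneg_div (k : nat) (w : 'I_k -> int) (m : 'I_k -> nat) (i : 'I_k) : rat :=
  (Num.max (- w i) 0)%:~R / (m i)%:R.
Definition fdk_bound (n k : nat) (w : 'I_k -> int) (m : 'I_k -> nat) : int :=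
  (n.+1)%:Z * (Num.ceil (sup_norm (vpos_div w m)) + Num.ceil (sup_norm (vneg_div w m))).

From HB Require Import structures.
From mathcomp Require Import all_boot all_order all_algebra.
From mathcomp Require Import zify ring lra.
From Stdlib Require Import Classical_Prop.
Set Implicit Arguments. Unset Strict Implicit. Unset Printing Implicit Defensive.
Import Order.TTheory GRing.Theory Num.Theory.
Local Open Scope ring_scope.

(* Let w be a nonzero integral vector in fdk(f) (a rational one is first
   scaled), and c+ = ⌈‖w⁺/m‖∞⌉, c- = ⌈‖w⁻/m‖∞⌉, so that -c- m ≤ w ≤ c+ m.
   For i ≥ (n+1) c- the polynomial f^i ∏ g^(w_g) lies in R[x] and its values
   on R have valuation at least n i: at a fixed divisor witness a the
   valuation is exactly n i because Σ w_g v(g(a)) = 0, and elsewhere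
   v(f(a)) ≥ n+1 while Σ w_g v(g(a)) ≥ -c- v(f(a)).  So
   A = f^i ∏ g^(w_g) / p^(n i) lies in Int(R), and so does
   B = f^(j-i) ∏ g^(-w_g) / p^(n (j-i)) when j - i ≥ (n+1) c+; and A B = F^j.
   By unique factorization in K[x], A is not a unit times a power F^l of F:
   that would force w = (l - i) m, hence Σ w_g v(g(a)) = (l - i) n ≠ 0 at a
   witness.  As Int(R) is atomic, factoring A and B gives a factorization of
   F^j with an irreducible factor not associated to F, which contradicts
   absolute irreducibility and, when F is irreducible, differs essentially
   from F ⋯ F. *)

Lemma sup_norm_ge k (u : 'I_k -> rat) i : u i <= sup_norm u.
Proof. exact: le_trans (ler_norm _) (le_bigmax _ _ i). Qed.

Lemma ceil_sup_norm_ge0 k (u : 'I_k -> rat) : 0 <= Num.ceil (sup_norm u).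
Proof. by rewrite ceil_ge0 (lt_le_trans _ (bigmax_ge_id _ _ _ _)). Qed.

Lemma le_ceil_sup_norm k (z : 'I_k -> int) (m : 'I_k -> nat) i : (0 < m i)%N ->
  z i <= Num.ceil (sup_norm (fun j => (z j)%:~R / (m j)%:R)) * (m i)%:Z.
Proof.
move=> mi; rewrite -(ler_int rat) intrM -ler_pdivrMr ?ltr0n //.
exact: le_trans (sup_norm_ge _ i) (ceil_ge _).
Qed.

Lemma le_ceil_vpos_div k (w : 'I_k -> int) (m : 'I_k -> nat) i : (0 < m i)%N ->
  w i <= Num.ceil (sup_norm (vpos_div w m)) * (m i)%:Z.
Proof. by move/(le_ceil_sup_norm (fun j => Num.max (w j) 0)); rewrite ge_max => /andP[]. Qed.

Lemma le_ceil_vneg_div k (w : 'I_k -> int) (m : 'I_k -> nat) i : (0 < m i)%N ->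
  - w i <= Num.ceil (sup_norm (vneg_div w m)) * (m i)%:Z.
Proof. by move/(le_ceil_sup_norm (fun j => Num.max (- w j) 0)); rewrite ge_max => /andP[]. Qed.

Lemma rat_vec_int_multiple k (u : 'I_k -> rat) :
  exists w : 'I_k -> int, exists2 D : rat, D != 0 & forall i, (w i)%:~R = u i * D.
Proof.
exists (fun i => numq (u i) * \prod_(l < k | l != i) denq (u l)).
exists (\prod_(l < k) denq (u l))%:~R.
  by rewrite intr_eq0; apply/prodf_neq0 => l _; exact: denq_neq0.
move=> i; rewrite [in RHS](bigD1 i) //= !rmorphM mulrA; congr (_ * _).
by rewrite -{2}(divq_num_den (u i)) mulfVK // intr_eq0 denq_neq0.
Qed.

Lemma irredp_dvdp_mul (K : fieldType) (q a b : {poly K}) :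
  irreducible_poly q -> q %| a * b -> (q %| a) || (q %| b).
Proof.
move=> q_irr qab; apply/orP; have [qb|nqb] := boolP (q %| b); [by right | left].
by rewrite -(Gauss_dvdpl _ (_ : coprimep q b)) // irreducible_poly_coprime.
Qed.

Lemma irredp_ndvdp1 (K : fieldType) (q : {poly K}) : irreducible_poly q -> ~~ (q %| 1).
Proof. by case=> sq _; rewrite dvdp1; apply: contraTN sq => /eqP ->. Qed.

Lemma irredp_dvdp_exp (K : fieldType) (q r : {poly K}) e :
  irreducible_poly q -> q %| r ^+ e -> (0 < e)%N && (q %| r).
Proof.
move=> q_irr; elim: e => [|e IHe]; first by rewrite (negbTE (irredp_ndvdp1 q_irr)).
by rewrite exprS => /(irredp_dvdp_mul q_irr)/orP[->|/IHe/andP[]].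
Qed.

Section PowerProducts.
Variables (K : fieldType) (k : nat) (P : 'I_k -> {poly K}).
Hypothesis P_irr : forall i, irreducible_poly (P i).
Hypothesis P_dvd_inj : forall i j, P i %| P j -> i = j.

Definition powprod (a : 'I_k -> nat) := \prod_(i < k) P i ^+ a i.

Lemma powprodD a b : powprod a * powprod b = powprod (fun i => a i + b i)%N.
Proof. by rewrite /powprod -big_split; apply: eq_bigr => i _; rewrite exprD. Qed.

Lemma powprodX a j : powprod a ^+ j = powprod (fun i => a i * j)%N.
Proof. by rewrite /powprod -prodrXl; apply: eq_bigr => i _; rewrite exprM. Qed.

Lemma eq_powprod a b : a =1 b -> powprod a = powprod b.
Proof. by move=> eab; apply: eq_bigr => i _; rewrite eab. Qed.

Lemma horner_powprod a x : (powprod a).[x] = \prod_(i < k) (P i).[x] ^+ a i.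
Proof. by rewrite horner_prod; apply: eq_bigr => i _; rewrite horner_exp. Qed.

Lemma dvdp_powprod i a : P i %| powprod a -> (0 < a i)%N.
Proof.
have Pi_irr := P_irr i; rewrite /powprod; elim: (index_enum _) => [|j r IHr].
  by rewrite big_nil (negbTE (irredp_ndvdp1 Pi_irr)).
rewrite big_cons => /(irredp_dvdp_mul Pi_irr)/orP[|/IHr//].
by case/(irredp_dvdp_exp Pi_irr)/andP => aj /P_dvd_inj ->.
Qed.

Definition decr_at (a : 'I_k -> nat) i j := if j == i then (a j).-1 else a j.

Lemma powprod_decr a i : (0 < a i)%N -> powprod a = P i * powprod (decr_at a i).
Proof.
move=> ai; rewrite /powprod (bigD1 i) //= [in RHS](bigD1 i) //= /decr_at eqxx.
rewrite mulrA -exprS prednK //; congr (_ * _).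
by apply: eq_bigr => j /negbTE ->.
Qed.

Lemma sum_decr a i : (0 < a i)%N -> (\sum_j a j = (\sum_j decr_at a i j).+1)%N.
Proof.
move=> ai; rewrite (bigD1 i) //= [in RHS](bigD1 i) //= /decr_at eqxx.
by rewrite -addSn prednK //; congr (_ + _)%N; apply: eq_bigr => j /negbTE ->.
Qed.

Lemma decr_at_inj a b i : (0 < a i)%N -> (0 < b i)%N ->
  decr_at a i =1 decr_at b i -> a =1 b.
Proof.
move=> ai bi eab j; have := eab j; rewrite /decr_at; case: eqP => // -> eab_i.
by rewrite -(prednK ai) -(prednK bi) eab_i.
Qed.

Lemma powprod_scale_inj a b c : c != 0 -> powprod a = c *: powprod b -> a =1 b.
Proof.
have pos_transfer a' b' c' i : c' != 0 -> powprod a' = c' *: powprod b' ->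
    (0 < a' i)%N -> (0 < b' i)%N.
  move=> c'0 eab ai; apply: dvdp_powprod.
  by rewrite -(dvdpZr _ _ c'0) -eab (powprod_decr ai) dvdp_mulr.
have null_case a' b' c' : c' != 0 -> powprod a' = c' *: powprod b' ->
    (forall i, a' i = 0%N) -> a' =1 b'.
  move=> c'0 eab a'0 i; rewrite a'0; apply/esym/eqP; rewrite eqn0Ngt.
  apply/negP => bi; have c'V0 : c'^-1 != 0 by rewrite invr_eq0.
  have eba : powprod b' = c'^-1 *: powprod a' by rewrite eab scalerA mulVf ?scale1r.
  by have := pos_transfer _ _ _ _ c'V0 eba bi; rewrite a'0.
move: {2}(\sum_j a j)%N (leqnn (\sum_j a j)) => s.
elim: s a b c => [|s IHs] a b c sa c0 eab.
  apply: (null_case _ _ c) => // i; apply/eqP; rewrite -leqn0.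
  by apply: leq_trans sa; rewrite (bigD1 i) //= leq_addr.
have [i ai|a0] := pickP (fun i => 0 < a i)%N; last first.
  by apply: (null_case _ _ c) => // i; apply/eqP; rewrite eqn0Ngt a0.
have bi := pos_transfer _ _ _ _ c0 eab ai.
apply: (decr_at_inj ai bi); apply: (IHs _ _ c) => //.
  by rewrite -ltnS -(sum_decr ai).
apply: (mulfI (irredp_neq0 (P_irr i))).
by rewrite -(powprod_decr ai) eab (powprod_decr bi) scalerAr.
Qed.

End PowerProducts.

(* [lia] compares atoms syntactically; abstracting every [v _] with [set]
   first identifies the convertible ones. *)
Ltac abstract_valuations v :=
  repeat match goal with H : context [v _] |- _ => revert H end;
  repeat match goal with |- context [v ?t] =>
    let a := fresh "vt" in set a := v t; clearbody a end;
  intros.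

Section Valuation.
Variables (K : fieldType) (v : K -> int) (p : K).
Hypothesis v_dvr : is_dvr v p.
Local Ltac vlia := abstract_valuations v; lia.

Lemma vM x y : x != 0 -> y != 0 -> v (x * y) = v x + v y.
Proof. exact: (dvr_mul v_dvr). Qed.

Lemma v1 : v 1 = 0.
Proof. by have := vM (oner_neq0 K) (oner_neq0 K); rewrite mulr1; vlia. Qed.

Lemma vV x : x != 0 -> v x^-1 = - v x.
Proof. by move=> x0; have := vM x0 (invr_neq0 x0); rewrite mulfV // v1; vlia. Qed.

Lemma vN x : v (- x) = v x.
Proof.
have [->|x0] := eqVneq x 0; first by rewrite oppr0.
have N10 : (-1 : K) != 0 by rewrite oppr_eq0 oner_neq0.
have vN1 : v (-1) = 0 by have := vM N10 N10; rewrite mulrNN mulr1 v1; vlia.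
by rewrite -mulN1r vM // vN1 add0r.
Qed.

Lemma vX x e : x != 0 -> v (x ^+ e) = e%:Z * v x.
Proof.
move=> x0; elim: e => [|e IHe]; first by rewrite expr0 v1 mul0r.
by rewrite exprS vM ?expf_neq0 // IHe; vlia.
Qed.

Lemma vp : v p = 1. Proof. exact: (dvr_vp v_dvr). Qed.
Lemma p_neq0 : p != 0. Proof. exact: (dvr_p_neq0 v_dvr). Qed.

Lemma inRE x : x != 0 -> inR v x = (0 <= v x).
Proof. by rewrite /inR => /negbTE ->. Qed.

Lemma inR0 : inR v 0. Proof. by rewrite /inR eqxx. Qed.
Lemma inR1 : inR v 1. Proof. by rewrite inRE ?oner_neq0 // v1. Qed.

Lemma inRD x y : inR v x -> inR v y -> inR v (x + y).
Proof.
have [->|x0] := eqVneq x 0; first by rewrite add0r.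
have [->|y0] := eqVneq y 0; first by rewrite addr0.
have [->|s0] := eqVneq (x + y) 0; first by rewrite inR0.
rewrite !inRE //; case/orP: (dvr_add v_dvr x0 y0 s0); vlia.
Qed.

Lemma inRM x y : inR v x -> inR v y -> inR v (x * y).
Proof.
have [->|x0] := eqVneq x 0; first by rewrite mul0r inR0.
have [->|y0] := eqVneq y 0; first by rewrite mulr0 inR0.
rewrite !inRE ?mulf_neq0 // vM //; vlia.
Qed.

Lemma inRX x e : inR v x -> inR v (x ^+ e).
Proof. by move=> Rx; elim: e => [|e IHe]; rewrite ?exprS ?inRM ?inR1. Qed.

Lemma inR_sum (I : Type) (r : seq I) (Q : pred I) (F : I -> K) :
  (forall i, Q i -> inR v (F i)) -> inR v (\sum_(i <- r | Q i) F i).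
Proof. by move=> RF; apply: (big_ind (inR v)) => //; [exact: inR0 | exact: inRD]. Qed.

Definition inpR (x : K) : bool := (x == 0) || (0 < v x).

Lemma inpR0 : inpR 0. Proof. by rewrite /inpR eqxx. Qed.
Lemma inpR1 : ~~ inpR 1. Proof. by rewrite /inpR oner_eq0 v1. Qed.

Lemma inpRD x y : inpR x -> inpR y -> inpR (x + y).
Proof.
have [->|x0] := eqVneq x 0; first by rewrite add0r.
have [->|y0] := eqVneq y 0; first by rewrite addr0.
have [->|s0] := eqVneq (x + y) 0; first by rewrite inpR0.
rewrite /inpR (negbTE x0) (negbTE y0) (negbTE s0) /=.
case/orP: (dvr_add v_dvr x0 y0 s0); vlia.
Qed.

Lemma inpRMl x y : inR v x -> inpR y -> inpR (x * y).
Proof.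
have [->|x0] := eqVneq x 0; first by rewrite mul0r inpR0.
have [->|y0] := eqVneq y 0; first by rewrite mulr0 inpR0.
rewrite inRE // /inpR (negbTE y0) mulf_eq0 (negbTE x0) (negbTE y0) /= vM //; vlia.
Qed.

Lemma inpRMr x y : inpR x -> inR v y -> inpR (x * y).
Proof. by rewrite mulrC => *; apply: inpRMl. Qed.

Lemma inpR_sum (I : Type) (r : seq I) (Q : pred I) (F : I -> K) :
  (forall i, Q i -> inpR (F i)) -> inpR (\sum_(i <- r | Q i) F i).
Proof. by move=> pF; apply: (big_ind inpR) => //; [exact: inpR0 | exact: inpRD]. Qed.

Lemma unitR x : inR v x -> ~~ inpR x -> x != 0 /\ v x = 0.
Proof. by rewrite /inR /inpR; case: eqP => //= _; vlia. Qed.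

Lemma unitR_addr x y : x != 0 -> v x = 0 -> inpR y -> x + y != 0 /\ v (x + y) = 0.
Proof.
move=> x0 vx; have [->|y0] := eqVneq y 0; first by rewrite addr0.
rewrite /inpR (negbTE y0) /= => vy.
have s0 : x + y != 0.
  by apply: contraTneq vy => /(canRL (addKr x)); rewrite addr0 => ->; rewrite vN vx.
split => //; have my0 : - y != 0 by rewrite oppr_eq0.
have := dvr_add v_dvr s0 my0; rewrite addrK vN => /(_ x0).
case/orP: (dvr_add v_dvr x0 y0 s0); vlia.
Qed.

Lemma hornerR s x : polyR v s -> inR v x -> inR v s.[x].
Proof.
move=> Rs Rx; rewrite horner_coef; apply: inR_sum => i _.
by apply: inRM; [exact: Rs | exact: inRX].
Qed.

Lemma polyRM s t : polyR v s -> polyR v t -> polyR v (s * t).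
Proof. by move=> Rs Rt i; rewrite coefM; apply: inR_sum => j _; exact: inRM. Qed.

Lemma polyRZ c s : inR v c -> polyR v s -> polyR v (c *: s).
Proof. by move=> Rc Rs i; rewrite coefZ inRM. Qed.

Lemma polyR_polyC c : inR v c -> polyR v c%:P.
Proof. by move=> Rc i; rewrite coefC; case: eqP => _ //; exact: inR0. Qed.

Lemma polyR_polyCK c : polyR v c%:P -> inR v c.
Proof. by move/(_ 0%N); rewrite coefC. Qed.

Lemma intRM a b : intR v a -> intR v b -> intR v (a * b).
Proof. by move=> Ia Ib x Rx; rewrite hornerM inRM ?Ia ?Ib. Qed.

Lemma intR_polyC c : inR v c -> intR v c%:P.
Proof. by move=> Rc x _; rewrite hornerC. Qed.

Lemma intR_polyCK c : intR v c%:P -> inR v c.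
Proof. by move/(_ 0 inR0); rewrite hornerC. Qed.

Section Units.
Variable S : {poly K} -> Prop.
Hypothesis S_polyC : forall c, inR v c -> S c%:P.
Hypothesis S_polyCK : forall c, S c%:P -> inR v c.

Lemma unitSP u : unitS S u -> exists2 e, u = e%:P & e != 0 /\ v e = 0.
Proof.
case=> Su [w Sw uw].
have := size_mul_eq1 u w; rewrite uw size_poly1 eqxx => /esym/andP[/eqP su /eqP sw].
have [eu ew] := (size1_polyC (eq_leq su), size1_polyC (eq_leq sw)).
have ee : u`_0 * w`_0 = 1 by apply: (@polyC_inj K); rewrite polyCM -eu -ew uw.
have [e0 e'0] : u`_0 != 0 /\ w`_0 != 0.
  by apply/andP; rewrite -negb_or -mulf_eq0 ee oner_neq0.
have Ru : inR v u`_0 by apply: S_polyCK; rewrite -eu.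
have Rw : inR v w`_0 by apply: S_polyCK; rewrite -ew.
move: Ru Rw; rewrite !inRE //; have := vM e0 e'0; rewrite ee v1.
by exists u`_0 => //; split => //; vlia.
Qed.

Lemma unitS_polyC e : e != 0 -> v e = 0 -> unitS S e%:P.
Proof.
move=> e0 ve; split; first by apply: S_polyC; rewrite inRE // ve.
exists e^-1%:P; last by rewrite -polyCM mulfV.
by apply: S_polyC; rewrite inRE ?invr_eq0 // vV // ve.
Qed.

Lemma unitS1 : unitS S 1.
Proof. by rewrite -polyC1; apply: unitS_polyC; [exact: oner_neq0 | exact: v1]. Qed.

Lemma unitSM u1 u2 : unitS S u1 -> unitS S u2 -> unitS S (u1 * u2).
Proof.
move=> /unitSP[e1 -> [e10 ve1]] /unitSP[e2 -> [e20 ve2]].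
by rewrite -polyCM; apply: unitS_polyC; rewrite ?mulf_neq0 // vM // ve1 ve2 addr0.
Qed.

Lemma unitSV u : unitS S u -> exists2 u', unitS S u' & u' * u = 1.
Proof.
move=> /unitSP[e -> [e0 ve]]; exists e^-1%:P; last by rewrite -polyCM mulVf.
by apply: unitS_polyC; rewrite ?invr_eq0 // vV // ve oppr0.
Qed.

Hypothesis S_mul : forall a b, S a -> S b -> S (a * b).

Lemma irredS_unitMl u r : unitS S u -> irredS S r -> irredS S (u * r).
Proof.
move=> Uu [Sr r0 Nur r_irr]; have [u' Uu' u'u] := unitSV Uu.
have cancel_u q : u' * (u * q) = q by rewrite mulrA u'u mul1r.
split.
- by apply: S_mul => //; case: Uu.
- by rewrite mulf_neq0 //; apply: contra_eq_neq u'u => ->; rewrite mulr0 eq_sym oner_eq0.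
- by move=> Uur; apply: Nur; rewrite -(cancel_u r); exact: unitSM.
move=> a b Sa Sb eab.
have : r = (u' * a) * b by rewrite -mulrA -eab cancel_u.
case/(r_irr _ _ (S_mul Uu'.1 Sa) Sb) => [Uu'a|]; [left|by right].
by rewrite -[a]mul1r -u'u [u' * u]mulrC -mulrA; exact: unitSM.
Qed.
End Units.

Lemma unit_polyRP u : unitS (polyR v) u -> exists2 e, u = e%:P & e != 0 /\ v e = 0.
Proof. exact: (unitSP (@polyR_polyCK)). Qed.

Lemma unit_polyR_polyC e : e != 0 -> v e = 0 -> unitS (polyR v) e%:P.
Proof. exact: (unitS_polyC (@polyR_polyC)). Qed.

Lemma unit_intRP u : unitS (intR v) u -> exists2 e, u = e%:P & e != 0 /\ v e = 0.
Proof. exact: (unitSP (@intR_polyCK)). Qed.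

Lemma unit_intR_polyC e : e != 0 -> v e = 0 -> unitS (intR v) e%:P.
Proof. exact: (unitS_polyC (@intR_polyC)). Qed.

Lemma unit_intR1 : unitS (intR v) 1.
Proof. exact: (unitS1 (@intR_polyC)). Qed.

Lemma unit_intRM u1 u2 : unitS (intR v) u1 -> unitS (intR v) u2 -> unitS (intR v) (u1 * u2).
Proof. exact: (unitSM (@intR_polyC) (@intR_polyCK)). Qed.

Lemma irred_intR_unitMl u r : unitS (intR v) u -> irredS (intR v) r -> irredS (intR v) (u * r).
Proof. exact: (irredS_unitMl (@intR_polyC) (@intR_polyCK) (@intRM)). Qed.

Definition primR (s : {poly K}) := polyR v s /\ exists i, ~~ inpR s`_i.

Lemma coef_notin_pR (s : {poly K}) : ~ (forall i, inpR s`_i) -> exists i, ~~ inpR s`_i.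
Proof.
move=> Nps; apply: NNPP => Nex; apply: Nps => i.
by apply: contraT => Ni; case: Nex; exists i.
Qed.

Lemma primRM s t : primR s -> primR t -> primR (s * t).
Proof.
move=> [Rs Ns] [Rt Nt]; split; first exact: polyRM.
have [i0 Ni0 min_i0] := ex_minnP Ns; have [j0 Nj0 min_j0] := ex_minnP Nt.
exists (i0 + j0)%N; rewrite coefM.
have lt_i0 : (i0 < (i0 + j0).+1)%N by rewrite ltnS leq_addr.
rewrite (bigD1 (Ordinal lt_i0)) //= addKn.
have [si0 vsi0] := unitR (Rs i0) Ni0; have [tj0 vtj0] := unitR (Rt j0) Nj0.
have vst : v (s`_i0 * t`_j0) = 0 by rewrite vM // vsi0 vtj0 addr0.
have other_terms_in_pR :
    inpR (\sum_(i < (i0 + j0).+1 | i != Ordinal lt_i0) s`_i * t`_(i0 + j0 - i)).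
  apply: inpR_sum => -[i lt_i] /=; rewrite -val_eqE /= => ne_i.
  have [lt_i_i0|le_i0_i] := ltnP i i0.
    apply: inpRMr; last exact: Rt.
    apply: contraT => /min_i0.
    by rewrite leqNgt lt_i_i0.
  apply: inpRMl; first exact: Rs.
  apply: contraT => /min_j0; rewrite leqNgt.
  have lt_i0_i : (i0 < i)%N by rewrite ltn_neqAle eq_sym ne_i le_i0_i.
  by move: lt_i lt_i0_i; lia.
have [st0 vst'] := unitR_addr (mulf_neq0 si0 tj0) vst other_terms_in_pR.
by rewrite /inpR negb_or st0 vst' ltxx.
Qed.

Lemma primR_scale s : s != 0 -> exists2 c, c != 0 & primR (c *: s).
Proof.
move=> s0; have lt_lead : ((size s).-1 < size s)%N by rewrite prednK ?size_poly_gt0.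
have lead_neq0 : s`_(Ordinal lt_lead) != 0 by rewrite /= -lead_coefE lead_coef_eq0.
have [i0 si0 min_i0] :=
  arg_minP (P := fun i : 'I_(size s) => s`_i != 0) (fun i => v s`_i) lead_neq0.
exists (s`_i0)^-1; rewrite ?invr_eq0 //; split; last first.
  by exists i0; rewrite coefZ mulVf // inpR1.
move=> i; rewrite coefZ; have [->|si] := eqVneq s`_i 0; first by rewrite mulr0 inR0.
have [lt_i|le_i] := ltnP i (size s); last by move: si; rewrite nth_default ?eqxx.
rewrite inRE ?mulf_neq0 ?invr_eq0 // vM ?invr_eq0 // vV //.
have := min_i0 (Ordinal lt_i) si; vlia.
Qed.

Lemma primR_scale_unit g h c : primR g -> primR h -> g = c *: h -> c != 0 /\ v c = 0.
Proof.
move=> [Rg [i Ni]] [Rh [i' Ni']] eg; subst g.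
have [hi' vhi'] := unitR (Rh i') Ni'.
have [chi vchi] := unitR (Rg i) Ni; rewrite coefZ in chi vchi.
have [c0 hi] : c != 0 /\ h`_i != 0 by apply/andP; rewrite -negb_or -mulf_eq0.
split => //; have := Rg i'; have := Rh i.
by rewrite coefZ !inRE ?mulf_neq0 // vM // vM // in vchi *; vlia.
Qed.

Lemma irreducible_primR g :
  irredS (polyR v) g -> primR g -> (1 < size g)%N -> irreducible_poly g.
Proof.
move=> [Rg g0 Nug g_irr] pg sg; split => // q sq /dvdpP[r er].
have [q0 r0] : q != 0 /\ r != 0 by apply/andP; rewrite -negb_or -mulf_eq0 mulrC -er.
have [l l0 pq] := primR_scale q0.
have [mu mu0 pr] : exists2 mu, mu != 0 & primR (mu *: (l^-1 *: r)).
  by apply: primR_scale; rewrite scaler_eq0 invr_eq0 negb_or l0.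
have eg : g = mu^-1 *: ((mu *: (l^-1 *: r)) * (l *: q)).
  rewrite er -scalerAl scalerA mulVf // scale1r -scalerAl -scalerAr scalerA.
  by rewrite mulVf // scale1r.
have [_ vmu] := primR_scale_unit pg (primRM pr pq) eg.
have Rr : polyR v (l^-1 *: r).
  rewrite -[l^-1 *: r]scale1r -(mulVf mu0) -scalerA; apply: polyRZ pr.1.
  by rewrite inRE ?invr_eq0 // vmu.
have eg' : g = (l *: q) * (l^-1 *: r).
  by rewrite mulrC -scalerAl -scalerAr scalerA mulVf // scale1r er.
rewrite er; case: (g_irr _ _ pq.1 Rr eg') => /unit_polyRP [e he [e0 _]].
  by move: sq; rewrite -(size_scale q l0) he size_polyC e0.
have -> : r = (l * e)%:P by rewrite polyCM mul_polyC -he scalerA mulfV ?scale1r.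
by rewrite eqp_sym mul_polyC eqp_scale // mulf_neq0.
Qed.

Lemma primitiveR_primR f : polyR v f -> primitiveR v f -> primR f.
Proof.
move=> Rf [c [Rc sc]]; split => //; apply: coef_notin_pR => pf.
suff : inpR (\sum_(i < size f) c i * f`_i) by rewrite sc; apply/negP; exact: inpR1.
by apply: inpR_sum => i _; exact: inpRMl.
Qed.

Lemma primR_irr_divisor g f : primR f -> irredS (polyR v) g -> dvdS (polyR v) g f ->
  primR g /\ (1 < size g)%N.
Proof.
move=> [Rf [i0 Ni0]] [Rg g0 Nug _] [h Rh e].
have pg : primR g.
  split => //; apply: coef_notin_pR => pg; move/negP: Ni0; apply.
  by rewrite e coefM; apply: inpR_sum => j _; apply: inpRMr.
split => //; rewrite ltnNge; apply/negP => sg; have eg := size1_polyC sg.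
case: pg => _ [i Ni]; have [gi0 vgi] := unitR (Rg i) Ni.
have ei : i = 0%N by apply: contraNeq gi0; rewrite eg coefC => /negbTE ->.
by apply: Nug; rewrite eg -ei; exact: unit_polyR_polyC.
Qed.

(* A factorization G = a b in Int(R) with b not a unit decreases the measure:
   either b has positive degree or b is a constant of positive valuation. *)
Definition fact_measure (x0 : K) (G : {poly K}) := (size G + `|v G.[x0]|)%N.

Lemma fact_measure_lt x0 G a b : inR v x0 -> intR v a -> intR v b -> G = a * b ->
  G.[x0] != 0 -> ~ unitS (intR v) b -> (fact_measure x0 a < fact_measure x0 G)%N.
Proof.
move=> Rx0 Ia Ib eG Gx0 Nub; rewrite /fact_measure.
have [ax0 bx0] : a.[x0] != 0 /\ b.[x0] != 0.
  by apply/andP; rewrite -negb_or -mulf_eq0 -hornerM -eG.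
have a0 : a != 0 by apply: contraNneq ax0 => ->; rewrite horner0.
have b0 : b != 0 by apply: contraNneq bx0 => ->; rewrite horner0.
have va : 0 <= v a.[x0] by rewrite -inRE // Ia.
have vb : 0 <= v b.[x0] by rewrite -inRE // Ib.
have vG : v G.[x0] = v a.[x0] + v b.[x0] by rewrite eG hornerM vM.
have sG : size G = (size a + size b).-1 by rewrite eG size_mul.
have sa : (0 < size a)%N by rewrite size_poly_gt0.
have [sb|sb] := ltnP 1 (size b).
  by rewrite vG sG; move: va vb sb sa; vlia.
have eb := size1_polyC sb; set c := b`_0 in eb.
have c0 : c != 0 by apply: contraNneq b0; rewrite eb => ->.
have vc : v c != 0.
  by apply/eqP => vc; apply: Nub; rewrite eb; exact: unit_intR_polyC.
have vbc : v b.[x0] = v c by rewrite eb hornerC.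
have Rc : 0 <= v c by rewrite -inRE //; apply: intR_polyCK; rewrite -eb.
have sb0 : (0 < size b)%N by rewrite size_poly_gt0.
by rewrite vG sG; move: va vb vbc vc Rc sb sb0 sa; vlia.
Qed.

Lemma intR_factorization x0 G : inR v x0 -> intR v G -> G.[x0] != 0 ->
  exists u s, [/\ unitS (intR v) u, (forall r, r \in s -> irredS (intR v) r) &
     G = u * \prod_(r <- s) r].
Proof.
move=> Rx0; move: {2}(fact_measure x0 G) (leqnn (fact_measure x0 G)) => N.
elim: N G => [|N IHN] G mG IG Gx0.
  have : (0 < size G)%N by rewrite size_poly_gt0; apply: contraNneq Gx0 => ->; rewrite horner0.
  by move: mG; rewrite /fact_measure; lia.
have [UG|NuG] := classic (unitS (intR v) G).
  by exists G, [::]; split => //; rewrite big_nil mulr1.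
have [irrG|NirrG] := classic (irredS (intR v) G).
  exists 1, [:: G]; split; first exact: unit_intR1.
    by move=> r; rewrite inE => /eqP ->.
  by rewrite big_seq1 mul1r.
have [a [b [Ia Ib eG Nua Nub]]] : exists a b,
    [/\ intR v a, intR v b, G = a * b, ~ unitS (intR v) a & ~ unitS (intR v) b].
  apply: NNPP => Nab; apply: NirrG; split => //.
    by apply: contraNneq Gx0 => ->; rewrite horner0.
  move=> a b Ia Ib eG; apply: NNPP => /not_or_and[Nua Nub].
  by apply: Nab; exists a, b.
have [ax0 bx0] : a.[x0] != 0 /\ b.[x0] != 0.
  by apply/andP; rewrite -negb_or -mulf_eq0 -hornerM -eG.
have ma := fact_measure_lt Rx0 Ia Ib eG Gx0 Nub.
have mb := fact_measure_lt Rx0 Ib Ia (etrans eG (mulrC a b)) Gx0 Nua.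
have [ua [sa [Uua sa_irr ea]]] := IHN a (leq_trans ma mG) Ia ax0.
have [ub [sb [Uub sb_irr eb]]] := IHN b (leq_trans mb mG) Ib bx0.
exists (ua * ub), (sa ++ sb); split; first exact: unit_intRM.
  by move=> r; rewrite mem_cat => /orP[]; [exact: sa_irr | exact: sb_irr].
by rewrite eG ea eb big_cat /=; ring.
Qed.

Lemma assoc_intR_unitMl u r F : unitS (intR v) u ->
  assocS (intR v) (u * r) F -> assocS (intR v) r F.
Proof.
move=> /unit_intRP[e -> [e0 ve]] [u' Uu' eu'].
exists (e^-1%:P * u'); last by rewrite -mulrA -eu' mulrA -polyCM mulVf // mul1r.
by apply: unit_intRM Uu'; apply: unit_intR_polyC; rewrite ?invr_eq0 // vV // ve oppr0.
Qed.

Lemma assoc_intR_prod (s : seq {poly K}) F :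
  (forall r, r \in s -> assocS (intR v) r F) -> assocS (intR v) (\prod_(r <- s) r) (F ^+ size s).
Proof.
elim: s => [|a s IHs] s_assoc.
  by exists 1; rewrite ?big_nil ?mul1r //; exact: unit_intR1.
rewrite big_cons /= exprS; have [u Uu ->] : assocS (intR v) (\prod_(r <- s) r) (F ^+ size s).
  by apply: IHs => r rs; apply: s_assoc; rewrite inE rs orbT.
have [u' Uu' ->] := s_assoc a (mem_head _ _).
by exists (u' * u); [exact: unit_intRM | ring].
Qed.

Lemma v_prod_exp (I : Type) (r : seq I) (y : I -> K) (e : I -> nat) :
  \prod_(i <- r) y i ^+ e i != 0 ->
  v (\prod_(i <- r) y i ^+ e i) = \sum_(i <- r) (e i)%:Z * v (y i).
Proof.
elim: r => [|a r IHr]; first by rewrite !big_nil v1.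
rewrite !big_cons mulf_eq0 negb_or => /andP[ya0 r0]; rewrite vM // IHr //.
case: (e a) ya0 => [|q] ya0; first by rewrite expr0 v1 mul0r.
by rewrite vX //; apply: contraNneq ya0 => ->; rewrite expr0n.
Qed.

Lemma intR_scale_pX q e : (forall x, inR v x -> q.[x] != 0 -> e%:Z <= v q.[x]) ->
  intR v ((p ^+ e)^-1 *: q).
Proof.
move=> q_ge x Rx; rewrite hornerZ; have [->|qx0] := eqVneq q.[x] 0; first by rewrite mulr0 inR0.
have pe0 : p ^+ e != 0 by rewrite expf_neq0 // p_neq0.
rewrite inRE ?mulf_neq0 ?invr_eq0 // vM ?invr_eq0 // vV // vX ?p_neq0 // vp.
by have := q_ge x Rx qx0; vlia.
Qed.

Lemma factorization_not_assoc A B G x0 : inR v x0 -> intR v A -> intR v B ->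
  (A * B).[x0] != 0 -> (forall l, ~ assocS (intR v) A (G ^+ l)) ->
  exists t, factorizationS (intR v) (A * B) t /\ exists2 r, r \in t & ~ assocS (intR v) r G.
Proof.
move=> Rx0 IA IB ABx0 NA; have [Ax0 Bx0] : A.[x0] != 0 /\ B.[x0] != 0.
  by apply/andP; rewrite -negb_or -mulf_eq0 -hornerM.
have [uA [sA [UuA sA_irr eA]]] := intR_factorization Rx0 IA Ax0.
have [uB [sB [UuB sB_irr eB]]] := intR_factorization Rx0 IB Bx0.
have [r0 r0_sA Nr0] : exists2 r0, r0 \in sA & ~ assocS (intR v) r0 G.
  apply: NNPP => Nex; apply: (NA (size sA)); rewrite eA.
  have [u Uu ->] : assocS (intR v) (\prod_(r <- sA) r) (G ^+ size sA).
    by apply: assoc_intR_prod => r r_sA; apply: NNPP => Nr; apply: Nex; exists r.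
  by exists (uA * u); [exact: unit_intRM | rewrite mulrA].
have UuAB := unit_intRM UuA UuB.
exists ((uA * uB * r0) :: (rem r0 sA ++ sB)); split; last first.
  by exists (uA * uB * r0); [exact: mem_head | move/(assoc_intR_unitMl UuAB)].
split.
  move=> r; rewrite inE => /orP[/eqP ->|]; first exact: irred_intR_unitMl (sA_irr _ r0_sA).
  by rewrite mem_cat => /orP[/mem_rem|]; [exact: sA_irr | exact: sB_irr].
rewrite big_cons big_cat /= eA eB (perm_big _ (perm_to_rem r0_sA)) big_cons /=; ring.
Qed.

Lemma assoc_intR_sym a b : assocS (intR v) a b -> assocS (intR v) b a.
Proof.
case=> u Uu ->; have [u' Uu' u'u] := unitSV (@intR_polyC) (@intR_polyCK) Uu.
by exists u'; rewrite // mulrA u'u mul1r.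
Qed.

Lemma nonunique_power_factorization G j t x : irredS (intR v) G ->
  factorizationS (intR v) (G ^+ j) t -> x \in t -> ~ assocS (intR v) x G ->
  factors_nonuniquely (intR v) (G ^+ j).
Proof.
move=> G_irr t_fact xt Nx; exists (nseq j G), t; split => //.
  by split; [move=> r /nseqP[->] | rewrite big_nseq iter_mulr mulr1].
case=> sz [t' [tt' assoc_t']]; apply: Nx.
have xt' : x \in t' by rewrite -(perm_mem tt').
have lt_x : (index x t' < size (nseq j G))%N by rewrite sz (perm_size tt') index_mem.
have := assoc_t' _ lt_x; rewrite nth_index // nth_nseq -(size_nseq j G) lt_x.
exact: assoc_intR_sym.
Qed.

End Valuation.

Lemma not_abs_irred_power_factor (K : fieldType) (S : {poly K} -> Prop) G j t x :
  factorizationS S (G ^+ j) t -> x \in t -> ~ assocS S x G -> ~ abs_irredS S G.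
Proof.
move=> t_fact xt Nx [_ /(_ j t t_fact)[sz [t' [tt' assoc_t']]]]; apply: Nx.
have := assoc_t' (index x t); rewrite index_mem nth_index // => /(_ xt).
have : nth 0 t' (index x t) \in nseq j G.
  by rewrite (perm_mem tt') mem_nth // -(perm_size tt') -sz index_mem.
by case/nseqP => ->.
Qed.

Section FixedDivisorKernel.
Variables (K : fieldType) (v : K -> int) (p : K).
Variables (f : {poly K}) (k : nat) (P : 'I_k -> {poly K}) (m : 'I_k -> nat) (n : nat).
Hypothesis v_dvr : is_dvr v p.
Hypotheses (Rf : polyR v f) (f_prim : primitiveR v f) (P_div : irr_divisor_set v P f).
Hypotheses (f_eq : f = \prod_(i < k) P i ^+ m i) (f_fdv : fd_val v f n) (n_gt0 : (0 < n)%N).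

Local Notation F := ((p ^+ n)^-1 *: f).
Local Notation powprod := (powprod P).

Lemma P_primR i : primR v (P i) /\ (1 < size (P i))%N.
Proof.
have [P_irr_dvd _ _] := P_div; have [Pi_irr Pi_dvd] := P_irr_dvd i.
exact: (primR_irr_divisor v_dvr (primitiveR_primR v_dvr Rf f_prim) Pi_irr Pi_dvd).
Qed.

Lemma P_irreducible i : irreducible_poly (P i).
Proof.
have [P_irr_dvd _ _] := P_div; have [pPi sPi] := P_primR i.
exact: (irreducible_primR v_dvr (P_irr_dvd i).1 pPi sPi).
Qed.

Lemma P_dvdp_inj i j : P i %| P j -> i = j.
Proof.
move=> Pij; have [_ P_inj _] := P_div; apply: P_inj.
have : P i %= P j.
  by apply: (P_irreducible j).2 Pij; rewrite neq_ltn (P_primR i).2 orbT.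
case/eqpP=> -[c1 c2] /= /andP[c10 c20] e.
have ePij : P i = (c2 / c1) *: P j.
  by rewrite -[LHS]scale1r -(mulVf c10) -[in LHS]scalerA e scalerA mulrC.
have [c0 vc] := primR_scale_unit v_dvr (P_primR i).1 (P_primR j).1 ePij.
by exists (c2 / c1)%:P; [exact: (unit_polyR_polyC v_dvr) | rewrite mul_polyC].
Qed.

Lemma f_powprod : f = powprod m. Proof. exact: f_eq. Qed.

Lemma m_gt0 i : (0 < m i)%N.
Proof.
have [P_irr_dvd _ _] := P_div; have [_ [g _ eg]] := P_irr_dvd i.
by apply: (dvdp_powprod P_irreducible P_dvdp_inj); rewrite -f_powprod eg dvdp_mulr.
Qed.

Lemma v_powprod x a : (powprod a).[x] != 0 ->
  v (powprod a).[x] = \sum_i (a i)%:Z * v (P i).[x].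
Proof. by rewrite horner_powprod => ?; rewrite (v_prod_exp v_dvr). Qed.

Lemma horner_powprod_neq0 x a i : (powprod a).[x] != 0 -> (0 < a i)%N -> (P i).[x] != 0.
Proof.
rewrite horner_powprod => /prodf_neq0/(_ i isT).
by rewrite expf_eq0 => /nandP[/negbTE->|].
Qed.

Lemma v_P_ge0 x i : inR v x -> (P i).[x] != 0 -> 0 <= v (P i).[x].
Proof.
have [P_irr_dvd _ _] := P_div.
by move=> Rx Pix; rewrite -inRE // (hornerR v_dvr) //; case: (P_irr_dvd i) => -[].
Qed.

Definition in_fdkZ (u : 'I_k -> int) :=
  forall x, fd_witness v f n x -> \sum_i u i * v (P i).[x] = 0.

(* [powprod (shift_exp i u)] is f^i ∏ P_g^(u_g) as long as every
   i m_g + u_g is nonnegative. *)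
Definition shift_exp (i : nat) (u : 'I_k -> int) (g : 'I_k) : nat :=
  absz (i%:Z * (m g)%:Z + u g).

Lemma shift_exp_ge0 i u c g : c <= i%:Z -> - u g <= c * (m g)%:Z ->
  0 <= i%:Z * (m g)%:Z + u g.
Proof. by move=> ci u_ge; have := ler_wpM2r (ler0n _ (m g)) ci; lia. Qed.

Lemma shift_expE i u g : 0 <= i%:Z * (m g)%:Z + u g ->
  (shift_exp i u g)%:Z = i%:Z * (m g)%:Z + u g.
Proof. exact: gez0_abs. Qed.

Lemma v_shift_ge u c i x : 0 <= c -> (n.+1)%:Z * c <= i%:Z ->
  (forall g, - u g <= c * (m g)%:Z) -> in_fdkZ u ->
  inR v x -> (powprod (shift_exp i u)).[x] != 0 ->
  (n * i)%:Z <= v (powprod (shift_exp i u)).[x].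
Proof.
move=> c0 ci u_ge u_fdk Rx ax0.
have c_le_i : c <= i%:Z by apply: le_trans ci; rewrite ler_peMl // ler1n.
have aE g : (shift_exp i u g)%:Z = i%:Z * (m g)%:Z + u g.
  exact/shift_expE/(shift_exp_ge0 c_le_i).
set a := shift_exp i u in ax0 aE *.
rewrite v_powprod //.
have [fx0|fx0] := eqVneq f.[x] 0.
  (* some P_g vanishes at x, so i m_g + u_g = 0, which forces i = 0 *)
  move: fx0; rewrite f_powprod horner_powprod => /eqP/prodf_eq0[g _].
  rewrite expf_eq0 => /andP[_ /eqP Pgx0].
  have ag : a g = 0%N.
    by apply/eqP; rewrite eqn0Ngt; apply/negP => /(horner_powprod_neq0 ax0); rewrite Pgx0 eqxx.
  have i0 : i = 0%N by have := aE g; rewrite ag; have := u_ge g; have := m_gt0 g; nia.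
  rewrite i0 muln0; apply: sumr_ge0 => g' _.
  have [->|ag'] := posnP (a g'); first by rewrite mul0r.
  by rewrite mulr_ge0 // v_P_ge0 // (horner_powprod_neq0 ax0).
have Pgx0 g : (P g).[x] != 0.
  by apply: (horner_powprod_neq0 (a := m)) (m_gt0 g); rewrite -f_powprod.
have vfx : v f.[x] = \sum_g (m g)%:Z * v (P g).[x] by rewrite f_powprod v_powprod -?f_powprod.
have vfx_ge : n%:Z <= v f.[x] by case: f_fdv => _; apply.
have -> : \sum_g (a g)%:Z * v (P g).[x] = i%:Z * v f.[x] + \sum_g u g * v (P g).[x].
  by rewrite vfx mulr_sumr -big_split; apply: eq_bigr => g _; rewrite aE /=; ring.
have [vfx_eq|vfx_ne] := eqVneq (v f.[x]) n%:Z.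
  rewrite u_fdk; first by rewrite vfx_eq addr0 PoszM mulrC.
  by split; last split.
have u_sum_ge : - c * v f.[x] <= \sum_g u g * v (P g).[x].
  rewrite vfx mulr_sumr; apply: ler_sum => g _.
  by have := u_ge g; have := v_P_ge0 Rx (Pgx0 g); nia.
move: u_sum_ge vfx_ge vfx_ne ci c0; rewrite PoszM.
by set N := v f.[x]; set S := \sum_g _; nia.
Qed.

Definition shifted_factor i u := (p ^+ (n * i))^-1 *: powprod (shift_exp i u).

Lemma shifted_factor_intR u c i : 0 <= c -> (n.+1)%:Z * c <= i%:Z ->
  (forall g, - u g <= c * (m g)%:Z) -> in_fdkZ u -> intR v (shifted_factor i u).
Proof.
move=> c0 ci u_ge u_fdk; apply: (intR_scale_pX v_dvr) => x Rx ax0.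
exact: (v_shift_ge c0 ci u_ge u_fdk Rx ax0).
Qed.

Lemma shifted_factorM i1 i2 u :
  (forall g, 0 <= i1%:Z * (m g)%:Z + u g) -> (forall g, 0 <= i2%:Z * (m g)%:Z - u g) ->
  shifted_factor i1 u * shifted_factor i2 (fun g => - u g) = F ^+ (i1 + i2).
Proof.
move=> u_ge u_le; rewrite -scalerAl -scalerAr scalerA powprodD exprZn f_powprod powprodX.
rewrite -invfM -exprD -mulnDr exprVn -exprM mulnC; congr (_ *: _); apply: eq_powprod => g.
by apply/eqP; rewrite -eqz_nat PoszD !shift_expE ?PoszM ?PoszD //; apply/eqP; ring.
Qed.

Lemma shifted_factor_not_assoc u i l : (exists g, u g != 0) -> in_fdkZ u ->
  (forall g, 0 <= i%:Z * (m g)%:Z + u g) -> ~ assocS (intR v) (shifted_factor i u) (F ^+ l).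
Proof.
move=> [g0 ug0] u_fdk u_ge [e' /(unit_intRP v_dvr)[e -> [e0 _]] eA].
have pi0 : p ^+ (n * i) != 0 by rewrite expf_neq0 // (p_neq0 v_dvr).
have pn0 : (p ^+ n)^-1 ^+ l != 0 by rewrite expf_neq0 // invr_eq0 expf_neq0 // (p_neq0 v_dvr).
have : powprod (shift_exp i u) =
    (p ^+ (n * i) * (e * (p ^+ n)^-1 ^+ l)) *: powprod (fun g => m g * l)%N.
  rewrite -powprodX -f_powprod -scalerA -scalerA -exprZn -[e *: _]mul_polyC -eA.
  by rewrite /shifted_factor scalerKV.
move/(powprod_scale_inj P_irreducible P_dvdp_inj); rewrite !mulf_neq0 // => /(_ isT) shiftE.
have uE g : u g = (l%:Z - i%:Z) * (m g)%:Z.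
  have := shift_expE (u_ge g); rewrite shiftE PoszM => eg.
  by apply: (addrI (i%:Z * (m g)%:Z)); rewrite -eg; ring.
have [[x0 Rx0 [fx0 vfx0]] _] := f_fdv.
have := u_fdk x0 (conj Rx0 (conj fx0 vfx0)).
have -> : \sum_g u g * v (P g).[x0] = (l%:Z - i%:Z) * v f.[x0].
  rewrite f_powprod v_powprod -?f_powprod // mulr_sumr.
  by apply: eq_bigr => g _; rewrite uE mulrA.
move/eqP; rewrite vfx0 mulf_eq0 eqz_nat eqn0Ngt n_gt0 orbF => /eqP li.
by move: ug0; rewrite uE li mul0r eqxx.
Qed.

Lemma in_fdkZ_scale u w D : (forall i, (w i)%:~R = u i * D) ->
  in_fdk v f n P u -> in_fdkZ w.
Proof.
move=> wE u_fdk x wx; apply/eqP; rewrite -(@intr_eq0 rat) rmorph_sum /=.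
under eq_bigr do rewrite rmorphM /= wE mulrAC.
by rewrite -mulr_suml u_fdk // mul0r.
Qed.

Lemma in_fdkZN u : in_fdkZ u -> in_fdkZ (fun g => - u g).
Proof. by move=> u_fdk x wx; under eq_bigr do rewrite mulNr; rewrite sumrN u_fdk ?oppr0. Qed.

Lemma power_factorization_not_assoc w j : (exists g, w g != 0) -> in_fdkZ w ->
  fdk_bound n w m <= j%:Z ->
  exists t, factorizationS (intR v) (F ^+ j) t /\ exists2 r, r \in t & ~ assocS (intR v) r F.
Proof.
move=> w_neq0 w_fdk; rewrite /fdk_bound.
set cp := Num.ceil _; set cn := Num.ceil _ => j_ge.
have [cp0 cn0] := (ceil_sup_norm_ge0 (vpos_div w m), ceil_sup_norm_ge0 (vneg_div w m)).
have w_le g : - - w g <= cp * (m g)%:Z by rewrite opprK le_ceil_vpos_div ?m_gt0.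
have w_ge g : - w g <= cn * (m g)%:Z by rewrite le_ceil_vneg_div ?m_gt0.
pose i := (n.+1 * `|cn|)%N; pose i' := (j - i)%N.
have iE : i%:Z = (n.+1)%:Z * cn by rewrite PoszM gez0_abs.
have i_le_j : (i <= j)%N by move: j_ge iE cp0; lia.
have i'_ge : (n.+1)%:Z * cp <= i'%:Z by rewrite /i'; move: j_ge iE i_le_j; lia.
have i_ge : (n.+1)%:Z * cn <= i%:Z by rewrite iE.
have cn_le_i : cn <= i%:Z by apply: le_trans i_ge; rewrite ler_peMl // ler1n.
have cp_le_i' : cp <= i'%:Z by apply: le_trans i'_ge; rewrite ler_peMl // ler1n.
have IA := shifted_factor_intR cn0 i_ge w_ge w_fdk.
have IB := shifted_factor_intR cp0 i'_ge w_le (in_fdkZN w_fdk).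
have eAB : shifted_factor i w * shifted_factor i' (fun g => - w g) = F ^+ j.
  rewrite shifted_factorM ?subnKC // => g.
    exact: (shift_exp_ge0 cn_le_i (w_ge g)).
  exact: (shift_exp_ge0 (u := fun g => - w g) cp_le_i' (w_le g)).
have [[x0 Rx0 [fx0 _]] _] := f_fdv.
rewrite -eAB; apply: (factorization_not_assoc v_dvr Rx0 IA IB).
  rewrite eAB horner_exp hornerZ expf_neq0 // mulf_neq0 // invr_eq0 expf_neq0 //.
  exact: (p_neq0 v_dvr).
by move=> l; apply: shifted_factor_not_assoc => // g; exact: (shift_exp_ge0 cn_le_i).
Qed.

End FixedDivisorKernel.

Theorem theorem1 (K : fieldType) (v : K -> int) (p : K) (Hdvr : is_dvr v p)
  (f : {poly K}) (k : nat) (P : 'I_k -> {poly K}) (m : 'I_k -> nat) (n : nat) :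
  polyR v f -> primitiveR v f -> (1 < size f)%N ->
  irr_divisor_set v P f -> f = \prod_(i < k) P i ^+ m i ->
  fd_val v f n -> (0 < n)%N ->
  let F := (p ^+ n)^-1 *: f in
  ((exists u : 'I_k -> rat, in_fdk v f n P u /\ exists i, u i != 0) ->
      ~ abs_irredS (intR v) F) /\
  (forall w : 'I_k -> int, (exists i, w i != 0) ->
      in_fdk v f n P (fun i => (w i)%:~R) ->
      irredS (intR v) F ->
      forall j : nat, fdk_bound n w m <= j%:Z ->
        factors_nonuniquely (intR v) (F ^+ j)).
Proof.
move=> Rf f_prim _ P_div f_eq f_fdv n_gt0 F.
have factor_not_assoc := power_factorization_not_assoc Hdvr Rf f_prim P_div f_eq f_fdv n_gt0.
split.
  move=> [u [u_fdk [i ui0]]]; have [w [D D0 wE]] := rat_vec_int_multiple u.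
  have w_neq0 : exists i, w i != 0 by exists i; rewrite -(@intr_eq0 rat) wE mulf_neq0.
  have [t [t_fact [r rt Nr]]] :=
    factor_not_assoc w `|fdk_bound n w m|%N w_neq0 (in_fdkZ_scale wE u_fdk) (ler_norm _).
  exact: (not_abs_irred_power_factor t_fact rt Nr).
move=> w w_neq0 w_fdk F_irr j j_ge.
have wE i : (w i)%:~R = (w i)%:~R * 1 :> rat by rewrite mulr1.
have [t [t_fact [r rt Nr]]] := factor_not_assoc w j w_neq0 (in_fdkZ_scale wE w_fdk) j_ge.
exact: (nonunique_power_factorization Hdvr F_irr t_fact rt Nr).
Qed.
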